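(* Under the setting in the context, write $A=A_1+A_2$, where $A_1$ is the block-diagonal part of $A$ with respect to the partition $\{1,\dots,n\}=\mathcal C_1\sqcup\mathcal C_2$ (so $(A_1)_{ij}=A_{ij}$ if $i,j$ lie in the same class and $0$ otherwise) and $A_2=A-A_1$ is the cross-class part. Write $$M^{-1}=\begin{pmatrix}\widetilde M_{11}&\widetilde M_{12}\\ \widetilde M_{21}&\widetilde M_{22}\end{pmatrix}$$ in block form with respect to this partition. Let $\epsilon>0$. If $\|A_2\|_1<\epsilon$, then $$\|\widetilde M_{12}\|_1<\Big(\frac{1}{c\,d_{\min}}\Big)^2\epsilon,$$ where $c=\min\{1/\lambda,\,w_0\}$, $d_{\min}=\min_i D_{ii}$, and $\|\cdot\|_1$ denotes the matrix norm induced by the vector $\ell^1$-norm (maximum absolute column sum).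
   Context: Let $n\ge1$ and let $\{1,\dots,n\}=\mathcal L\sqcup\mathcal U$ be a partition into labeled indices $\mathcal L$ and unlabeled indices $\mathcal U$. Let $A\in\mathbb R^{n\times n}$ be symmetric with nonnegative entries. Let $D$ be the diagonal matrix with $D_{ii}=\sum_jA_{ij}$, and assume $D_{ii}>0$ for all $i$. Fix $\lambda>0$ and $w_0>0$. Let $P$ be diagonal with $P_{ii}=\frac1\lambda D_{ii}$ for $i\in\mathcal L$ and $P_{ii}=w_0D_{ii}$ for $i\in\mathcal U$. Set $M=D+P-A$; it is invertible. The indices are also partitioned, independently of $\mathcal L,\mathcal U$, by their true class: $\{1,\dots,n\}=\mathcal C_1\sqcup\mathcal C_2$, where $\mathcal C_1$ is the set of positive points and $\mathcal C_2$ the set of negative points. Indices are ordered so that $\mathcal C_1$ comes first. *)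

From HB Require Import structures.
From mathcomp Require Import all_boot all_order all_algebra.
Set Implicit Arguments. Unset Strict Implicit. Unset Printing Implicit Defensive.
Import Order.TTheory GRing.Theory Num.Theory.
Local Open Scope ring_scope.

(* Index set {1..n} is 'I_(n1 + n2); class C1 = first n1 indices, C2 = last n2. *)

Definition degm {R : realFieldType} {n : nat} (A : 'M[R]_n) (i : 'I_n) : R :=
  \sum_j A i j.

Definition Dmx {R : realFieldType} {n : nat} (A : 'M[R]_n) : 'M[R]_n :=
  diag_mx (\row_i degm A i).

(* P_ii = D_ii / lambda on labeled indices L, w0 * D_ii on unlabeled ones *)
Definition Pmx {R : realFieldType} {n : nat} (A : 'M[R]_n) (L : {set 'I_n})
  (lam w0 : R) : 'M[R]_n :=
  diag_mx (\row_i (if i \in L then lam^-1 * degm A i else w0 * degm A i)).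

Definition Mmx {R : realFieldType} {n : nat} (A : 'M[R]_n) (L : {set 'I_n})
  (lam w0 : R) : 'M[R]_n :=
  Dmx A + Pmx A L lam w0 - A.

Definition A1part {R : realFieldType} {n1 n2 : nat} (A : 'M[R]_(n1 + n2))
  : 'M[R]_(n1 + n2) :=
  \matrix_(i, j) (if (i < n1)%N == (j < n1)%N then A i j else 0).

Definition A2part {R : realFieldType} {n1 n2 : nat} (A : 'M[R]_(n1 + n2))
  : 'M[R]_(n1 + n2) := A - A1part A.

Definition norm1 {R : realFieldType} {m n : nat} (B : 'M[R]_(m, n)) : R :=
  \big[(fun x y : R => Num.max x y)/0]_(j < n) \sum_(i < m) `|B i j|.

(* minimum degree; the default element of the fold is the total degree, which
   (for nonnegative A and n >= 1) does not affect the minimum. *)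
Definition dmin {R : realFieldType} {n : nat} (A : 'M[R]_n) : R :=
  \big[(fun x y : R => Num.min x y)/ (\sum_i degm A i)]_(i < n) degm A i.

From HB Require Import structures.
From mathcomp Require Import all_boot all_order all_algebra.
From mathcomp Require Import lra.
Set Implicit Arguments. Unset Strict Implicit. Unset Printing Implicit Defensive.
Import Order.TTheory GRing.Theory Num.Theory.
Local Open Scope ring_scope.

(* The column margin of strict diagonal dominance of M = D + P - A is exactly
   P_jj >= c d_min =: delta, since by symmetry the column sums of A are the
   degrees.  A column margin delta gives ||N B||_1 >= delta ||B||_1, so M is
   invertible and ||M^-1||_1 <= 1/delta.  The upper-right block of
   M M^-1 = 1 reads M_11 X_12 = A_12 X_22, where X = M^-1, and the principal
   block M_11 keeps the margin delta; hence
   delta ||X_12||_1 <= ||A_2||_1 ||X||_1 <= ||A_2||_1 / delta. *)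

Section Norm1.
Variable R : realFieldType.

Lemma norm1_ge0 m n (B : 'M[R]_(m, n)) : 0 <= norm1 B.
Proof.
apply: (big_ind (fun x => 0 <= x)) => //; last by move=> j _; exact: sumr_ge0.
by move=> x y hx _; rewrite le_max hx.
Qed.

Lemma sum_col_le_norm1 m n (B : 'M[R]_(m, n)) j : \sum_i `|B i j| <= norm1 B.
Proof.
rewrite /norm1 (bigD1 j) //= le_max lexx //.
Qed.

Lemma norm1_le m n (B : 'M[R]_(m, n)) b :
  0 <= b -> (forall j, \sum_i `|B i j| <= b) -> norm1 B <= b.
Proof.
move=> hb hcol; apply: (big_ind (fun x => x <= b)) => // x y hx hy.
by rewrite ge_max hx.
Qed.

Lemma norm1_eq0 m n (B : 'M[R]_(m, n)) : (norm1 B == 0) = (B == 0).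
Proof.
apply/eqP/eqP => [hB | ->]; last first.
  apply/eqP; rewrite eq_le norm1_ge0 andbT; apply: norm1_le => // j.
  by rewrite big1 // => i _; rewrite mxE normr0.
apply/matrixP => i j; apply/eqP; rewrite mxE -normr_le0 -hB.
apply: le_trans (sum_col_le_norm1 B j).
by rewrite (bigD1 i) //= lerDl sumr_ge0.
Qed.

Lemma norm1_mulmx m n p (B : 'M[R]_(m, n)) (C : 'M[R]_(n, p)) :
  norm1 (B *m C) <= norm1 B * norm1 C.
Proof.
apply: norm1_le => [|j]; first by rewrite mulr_ge0 ?norm1_ge0.
apply: le_trans (_ : \sum_i \sum_k `|B i k| * `|C k j| <= _).
  apply: ler_sum => i _; rewrite mxE; apply: le_trans (ler_norm_sum _ _ _) _.
  by apply: ler_sum => k _; rewrite normrM.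
rewrite exchange_big /=.
apply: le_trans (_ : \sum_k norm1 B * `|C k j| <= _).
  by apply: ler_sum => k _; rewrite -mulr_suml ler_wpM2r ?sum_col_le_norm1.
by rewrite -mulr_sumr ler_wpM2l ?norm1_ge0 ?sum_col_le_norm1.
Qed.

Lemma norm1_usubmx m1 m2 n (B : 'M[R]_(m1 + m2, n)) : norm1 (usubmx B) <= norm1 B.
Proof.
apply: norm1_le => [|j]; first exact: norm1_ge0.
apply: le_trans (sum_col_le_norm1 B j); rewrite big_split_ord /=.
under eq_bigr do rewrite mxE.
by rewrite lerDl sumr_ge0.
Qed.

Lemma norm1_rsubmx m n1 n2 (B : 'M[R]_(m, n1 + n2)) : norm1 (rsubmx B) <= norm1 B.
Proof.
apply: norm1_le => [|j]; first exact: norm1_ge0.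
by under eq_bigr do rewrite mxE; exact: sum_col_le_norm1.
Qed.

Lemma norm1_ursubmx m1 m2 n1 n2 (B : 'M[R]_(m1 + m2, n1 + n2)) :
  norm1 (ursubmx B) <= norm1 B.
Proof. exact: le_trans (norm1_rsubmx _) (norm1_usubmx _). Qed.

Lemma norm1_dsubmx m1 m2 n (B : 'M[R]_(m1 + m2, n)) : norm1 (dsubmx B) <= norm1 B.
Proof.
apply: norm1_le => [|j]; first exact: norm1_ge0.
apply: le_trans (sum_col_le_norm1 B j); rewrite big_split_ord /=.
under eq_bigr do rewrite mxE.
by rewrite lerDr sumr_ge0.
Qed.

Lemma norm1_drsubmx m1 m2 n1 n2 (B : 'M[R]_(m1 + m2, n1 + n2)) :
  norm1 (drsubmx B) <= norm1 B.
Proof. exact: le_trans (norm1_rsubmx _) (norm1_dsubmx _). Qed.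

Lemma norm1_1mx n : norm1 (1%:M : 'M[R]_n) <= 1.
Proof.
apply: norm1_le => // j; rewrite (bigD1 j) //= big1 => [|i /negbTE hij].
  by rewrite mxE eqxx normr1 addr0.
by rewrite mxE hij normr0.
Qed.

End Norm1.

Section DiagonalDominance.
Variables (R : realFieldType) (n : nat).
Implicit Types (N : 'M[R]_n) (d : R).

(* The excess of |N j j| over the off-diagonal absolute sum of column j. *)
Definition dom_margin N j : R := 2 * `|N j j| - \sum_i `|N i j|.

Lemma dom_margin_col_le N p (B : 'M[R]_(n, p)) d j :
  (forall k, d <= dom_margin N k) ->
  d * \sum_k `|B k j| <= \sum_i `|(N *m B) i j|.
Proof.
move=> hd.
have row_le i : 2 * `|N i i * B i j| - \sum_k `|N i k * B k j| <= `|(N *m B) i j|.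
  rewrite mxE [\sum_k `|_|](bigD1 i) //= [\sum_k _ * _](bigD1 i) //=.
  have := lerB_normD (N i i * B i j) (\sum_(k | k != i) N i k * B k j).
  have := ler_norm_sum (index_enum 'I_n) (fun k => N i k * B k j) (fun k => k != i).
  lra.
apply: le_trans (ler_sum _ (fun i _ => row_le i)).
rewrite sumrB exchange_big /= -sumrB mulr_sumr; apply: ler_sum => k _.
under eq_bigr do rewrite normrM.
rewrite normrM -mulr_suml mulrA -mulrBl ler_wpM2r //.
exact: hd.
Qed.

Lemma dom_margin_norm1_mulmx N p (B : 'M[R]_(n, p)) d :
  0 <= d -> (forall k, d <= dom_margin N k) -> d * norm1 B <= norm1 (N *m B).
Proof.
move=> d_ge0 hd; apply: (big_ind (fun x => d * x <= norm1 (N *m B))).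
- by rewrite mulr0 norm1_ge0.
- by move=> x y hx hy; rewrite maxElt; case: ifP.
- move=> j _; apply: le_trans (dom_margin_col_le B j hd) _.
  exact: sum_col_le_norm1.
Qed.

Lemma dom_margin_unitmx N d :
  0 < d -> (forall k, d <= dom_margin N k) -> N \in unitmx.
Proof.
move=> d_gt0 hd; rewrite unitmxE unitfE -det_tr.
apply/negP => /det0P [v /negP v_neq0 hv]; apply: v_neq0.
have Nv0 : N *m v^T = 0 by rewrite -[N]trmxK -trmx_mul hv trmx0.
have := dom_margin_norm1_mulmx v^T (ltW d_gt0) hd.
rewrite Nv0.
have /eqP -> : norm1 (0 : 'M[R]_(n, 1)) == 0 by rewrite norm1_eq0.
rewrite pmulr_rle0 // => hv0.
by rewrite -trmx_eq0 -norm1_eq0 eq_le hv0 norm1_ge0.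
Qed.

End DiagonalDominance.

Lemma dom_margin_ulsubmx (R : realFieldType) n1 n2 (N : 'M[R]_(n1 + n2)) j :
  dom_margin N (lshift n2 j) <= dom_margin (ulsubmx N) j.
Proof.
rewrite /dom_margin big_split_ord /= !mxE; apply: lerB => //.
by under [X in X <= _]eq_bigr do rewrite !mxE; rewrite lerDl sumr_ge0.
Qed.

Lemma mulmx_eq1_ursubmx (R : pzRingType) n1 n2 (M X : 'M[R]_(n1 + n2)) :
  M *m X = 1%:M -> ulsubmx M *m ursubmx X = - (ursubmx M *m drsubmx X).
Proof.
move=> /(congr1 ursubmx); rewrite -[M]submxK -[X]submxK mulmx_block.
rewrite scalar_mx_block !block_mxKur !block_mxKdr !block_mxKul.
by move/eqP; rewrite addr_eq0 => /eqP.
Qed.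

Section Dmin.
Variables (R : realFieldType) (n : nat) (A : 'M[R]_n).

Lemma dmin_le i : dmin A <= degm A i.
Proof.
rewrite /dmin (bigD1 i) //= ge_min lexx //.
Qed.

Lemma dmin_gt0 : (0 < n)%N -> (forall i, 0 < degm A i) -> 0 < dmin A.
Proof.
move=> n_gt0 hdeg; apply: (big_ind (fun x => 0 < x)) => //.
- rewrite (bigD1 (Ordinal n_gt0)) //= ltr_wpDr ?hdeg //.
  by apply: sumr_ge0 => i _; apply: ltW.
- by move=> x y hx hy; rewrite lt_min hx.
Qed.

End Dmin.

Section RegularizedLaplacian.
Variables (R : realFieldType) (n : nat) (A : 'M[R]_n) (L : {set 'I_n}) (lam w0 : R).
Hypotheses (hsym : A^T = A) (hnonneg : forall i j, 0 <= A i j).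
Hypotheses (hlam : 0 < lam) (hw0 : 0 < w0).

Definition penalty i : R :=
  if i \in L then lam^-1 * degm A i else w0 * degm A i.

Lemma MmxE i j :
  Mmx A L lam w0 i j = (degm A i + penalty i) *+ (i == j) - A i j.
Proof. by rewrite /Mmx /Dmx /Pmx !mxE mulrnDl. Qed.

Lemma degm_ge0 i : 0 <= degm A i.
Proof. exact: sumr_ge0. Qed.

Lemma min_mul_degm_le_penalty i : Num.min lam^-1 w0 * degm A i <= penalty i.
Proof.
by rewrite /penalty; case: (i \in L); rewrite ler_wpM2r ?degm_ge0 // ge_min lexx ?orbT.
Qed.

Lemma dom_margin_Mmx j : dom_margin (Mmx A L lam w0) j = penalty j.
Proof.
have diag_le : A j j <= degm A j by rewrite /degm (bigD1 j) //= lerDl sumr_ge0.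
have pen_ge0 : 0 <= penalty j.
  apply: le_trans (min_mul_degm_le_penalty j).
  by rewrite mulr_ge0 ?degm_ge0 // le_min invr_ge0 !ltW.
have col_sum : degm A j = A j j + \sum_(i | i != j) A i j.
  rewrite /degm (bigD1 j) //=; congr (_ + _).
  by apply: eq_bigr => i _; rewrite -[in LHS]hsym mxE.
rewrite /dom_margin (bigD1 j) //=.
under eq_bigr => i /negbTE hij do rewrite MmxE hij mulr0n sub0r normrN ger0_norm //.
rewrite MmxE eqxx mulr1n ger0_norm; lra.
Qed.

End RegularizedLaplacian.

Lemma ursubmx_Mmx (R : realFieldType) n1 n2 (A : 'M[R]_(n1 + n2)) L lam w0 :
  ursubmx (Mmx A L lam w0) = - ursubmx (A2part A).
Proof.
apply/matrixP => i j; rewrite mxE [in LHS]mxE MmxE !mxE.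
have /negbTE -> : lshift n2 i != rshift n1 j.
  by apply/eqP => /(congr1 val) /= hij; move: (ltn_ord i); rewrite hij ltnNge leq_addr.
by rewrite /= ltn_ord ltnNge leq_addr /= subr0 mulr0n sub0r.
Qed.

Theorem lemma4p1 (R : realFieldType) (n1 n2 : nat) (A : 'M[R]_(n1 + n2))
  (L : {set 'I_(n1 + n2)}) (lam w0 eps : R)
  (hn : (0 < n1 + n2)%N)
  (hsym : A^T = A)
  (hnonneg : forall i j, 0 <= A i j)
  (hdeg : forall i, 0 < degm A i)
  (hlam : 0 < lam) (hw0 : 0 < w0) (heps : 0 < eps)
  (hA2 : norm1 (A2part A) < eps) :
  norm1 (ursubmx (invmx (Mmx A L lam w0)))
    < ((Num.min lam^-1 w0 * dmin A)^-1) ^+ 2 * eps.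
Proof.
set M := Mmx A L lam w0; set X := invmx M; set del := Num.min lam^-1 w0 * dmin A.
have del_gt0 : 0 < del by rewrite mulr_gt0 ?dmin_gt0 // lt_min invr_gt0 hlam.
have M_dom j : del <= dom_margin M j.
  rewrite dom_margin_Mmx //; apply: le_trans (min_mul_degm_le_penalty L lam w0 hnonneg j).
  by rewrite ler_wpM2l ?dmin_le // le_min invr_ge0 !ltW.
have MX1 : M *m X = 1%:M by rewrite mulmxV // (dom_margin_unitmx del_gt0 M_dom).
have normX : del * norm1 X <= 1.
  have := dom_margin_norm1_mulmx X (ltW del_gt0) M_dom.
  by rewrite MX1 => /le_trans; apply; apply: norm1_1mx.
have normX12 : del * norm1 (ursubmx X) <= norm1 (A2part A) * norm1 X.
  apply: le_trans (dom_margin_norm1_mulmx _ (ltW del_gt0) _) _.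
    by move=> j; apply: le_trans (dom_margin_ulsubmx _ j).
  rewrite mulmx_eq1_ursubmx // ursubmx_Mmx mulNmx opprK.
  apply: le_trans (norm1_mulmx _ _) _.
  by rewrite ler_pM ?norm1_ge0 ?norm1_ursubmx ?norm1_drsubmx.
rewrite exprVn mulrC ltr_pdivlMr ?exprn_gt0 //.
have := norm1_ge0 (A2part A); have := norm1_ge0 (ursubmx X).
nra.
Qed.
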